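(* Let $H$ be a graph with $1\le\delta(H)\le|V(H)|-2$ and let $\{\mathcal H_i\}_{i=1}^s$ be a $d$-sequence of $H$ such that $Z=\min\{z_i(H): 2\le i\le s\}\le 0$. Let $T$ be a graph with $1\le\delta(T)\le|V(T)|-2$ having a $d$-sequence $\{\mathcal T_i\}_{i=1}^t$ with $z_i(T)\ge0$ for all $2\le i\le t$. Let $G=H+T$. If $z_t(T)\ge d_H-Z$, then $|V(G)|+\delta(G)\le str(G)\le |V(G)|+d_T$.
   Context: For a graph $G$ of order $p$, a numbering of $G$ is a bijection $f:V(G)\to[1,p]$. The strength of a numbering $f$ is $str_f(G)=\max\{f(u)+f(v): uv\in E(G)\}$, and $str(G)=\min\{str_f(G): f \text{ a numbering of } G\}$. $\delta(G)$ is the minimum degree; $G+H$ denotes disjoint union; $mK_1$ is the edgeless graph on $m$ vertices; $K_r$ the complete graph. $d$-sequence: Let $G$ have order $p$ with $1\le\delta(G)\le p-2$. Set $\mathcal G_1=G_1=G$, $m_1=0$. For each $i$, write $\mathcal G_i=m_iK_1+G_i$, where $m_i\ge0$ is the number of isolated vertices of $\mathcal G_i$ and $G_i$ has no isolated vertices. If $\mathcal G_i$ is neither of the form $mK_1$ ($m\ge1$) nor $mK_1+K_r$ ($m\ge0$, $r\ge2$), choose any vertex $u_i$ of $G_i$, put $d_i=\deg_{G_i}(u_i)$, and let $\mathcal G_{i+1}$ be obtained from $G_i$ by deleting $u_i$ together with all its neighbours in $G_i$. Stop at the first index $s$ ($s\ge 2$) for which $\mathcal G_s$ is $m_sK_1$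 with $m_s\ge1$ (then set $d_s=0$) or $m_sK_1+K_r$ with $m_s\ge0$, $r\ge2$ (then $d_s=r-1$). The sequence $\{\mathcal G_i\}_{i=1}^s$ is a $d$-sequence of $G$. Write $d_G=d_1$, $y_j(G)=m_j+1-d_j$ and $z_i(G)=\sum_{j=2}^i y_j(G)$ for $2\le i\le s$. *)

(* Finite simple graphs as symmetric irreflexive relations
   on a finType. *)
From mathcomp Require Import all_boot all_order all_algebra.
Set Implicit Arguments. Unset Strict Implicit. Unset Printing Implicit Defensive.
Import Order.TTheory GRing.Theory Num.Theory.

Section Graphs.
Variable V : finType.
Variable e : rel V.

Definition deg (v : V) : nat := #|[set w | e v w]|.
Definition mindeg : nat := \big[minn/#|V|]_(v : V) deg v.

(* Numberings: bijections V -> [1,p], encoded as injective f : V -> 'I_p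
   with the label of v being (f v).+1. *)
Definition strf (f : {ffun V -> 'I_#|V|}) : nat :=
  \max_(u : V) \max_(v : V | e u v) ((f u).+1 + (f v).+1).
Definition str : nat :=
  \big[minn/(#|V| + #|V|)]_(f : {ffun V -> 'I_#|V|} | injectiveb f) strf f.

(* Induced subgraphs are given by their vertex set A. *)
Definition nbr (A : {set V}) (v : V) : {set V} := [set w in A | e v w].
(* vertices of A that are not isolated in G[A] (vertex set of G_i) *)
Definition core (A : {set V}) : {set V} := [set v in A | nbr A v != set0].
Definition mcount (A : {set V}) : nat := #|A :\: core A|.
Definition is_clique (A : {set V}) : bool :=
  [forall v in A, forall w in A, (v != w) ==> e v w].
(* G[A] is of the form m K_1 (m >= 1) or m K_1 + K_r (m >= 0, r >= 2) *)
Definition terminal (A : {set V}) : bool :=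
  ((core A == set0) && (A != set0)) || ((core A != set0) && is_clique (core A)).

(* A d-sequence {calG_i}_{i=1}^s with chosen vertices u_i (1 <= i < s);
   S i is the vertex set of calG_i. *)
Definition is_dseq (s : nat) (S : nat -> {set V}) (u : nat -> V) : Prop :=
  [/\ 2 <= s, S 1 = setT,
      (forall i, 1 <= i < s ->
         [/\ ~~ terminal (S i), u i \in core (S i) &
             S i.+1 = core (S i) :\: (u i |: nbr (core (S i)) (u i))])
    & terminal (S s)].

Definition dval (s : nat) (S : nat -> {set V}) (u : nat -> V) (i : nat) : nat :=
  if i < s then #|nbr (core (S i)) (u i)|
  else if core (S i) == set0 then 0 else (#|core (S i)|).-1.

Definition mval (S : nat -> {set V}) (i : nat) : nat := mcount (S i).

Local Open Scope ring_scope.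
Definition yval s S u (j : nat) : int :=
  (mval S j)%:Z + 1 - (dval s S u j)%:Z.
Definition zval s S u (i : nat) : int := \sum_(2 <= j < i.+1) yval s S u j.
Definition zmin s S u : int :=
  \big[Num.min/zval s S u 2]_(2 <= i < s.+1) zval s S u i.
End Graphs.

Definition sumrel (V1 V2 : finType) (e1 : rel V1) (e2 : rel V2) : rel (V1 + V2) :=
  fun x y => match x, y with
             | inl a, inl b => e1 a b
             | inr a, inr b => e2 a b
             | _, _ => false
             end.

From mathcomp Require Import all_boot all_order all_algebra zify.
Import Order.TTheory GRing.Theory Num.Theory.
Set Implicit Arguments. Unset Strict Implicit. Unset Printing Implicit Defensive.

(* The lower bound p + delta(G) <= str(G) holds for every graph without
   isolated vertices: the vertex numbered p has at least delta(G) neighbours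
   with distinct labels, one of which is therefore at least delta(G).

   For the upper bound we number the vertices by increasing value of a weight
   function W: then every vertex x gets a label at most rank(x), the number of
   vertices of weight at most W x, and str(G) is bounded by the largest value
   of rank(x) + rank(y) over the edges xy (str_le_wrank).  A d-sequence splits
   the vertices into stages; at each stage the pivot u_i, its d_i neighbours
   (the followers) and the isolated vertices are removed.  We order G = H + T
   as: followers of T by stage, followers of H by stage, then the remaining
   vertices of H and of T by decreasing stage.  Every edge joins a follower of
   some stage i to a vertex weighing at most the pivot of that stage
   (edge_anchored), and counting the vertices removed before stage i
   (budget) together with z_i(T) >= 0, resp. z_t(T) >= d_H - Z, bounds the
   rank sums by p + d_T. *)

Lemma card_ord_lt n k (A : {set 'I_n}) : {in A, forall i : 'I_n, i < k} -> #|A| <= k.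
Proof.
move=> Alt; rewrite cardE -(size_map val) -(size_iota 0 k); apply: uniq_leq_size.
  by rewrite (map_inj_uniq val_inj) enum_uniq.
by move=> _ /mapP [i iA ->]; rewrite mem_iota add0n Alt // -mem_enum.
Qed.

Section LowerBound.
Variables (V : finType) (e : rel V).

Lemma mindeg_le_deg x : mindeg e <= deg e x.
Proof. by rewrite /mindeg -minEnat; apply: (@bigmin_le _ nat V). Qed.

Lemma mindeg_le_card : mindeg e <= #|V|.
Proof. by rewrite /mindeg -minEnat; apply: (@bigmin_le_id _ nat V). Qed.

(* Under a numbering f, the vertex labelled #|V| has deg >= mindeg neighbours
   with pairwise distinct labels, so one of them is labelled at least mindeg. *)
Lemma strf_ge (f : {ffun V -> 'I_#|V|}) :
  0 < mindeg e -> injectiveb f -> #|V| + mindeg e <= strf e f.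
Proof.
move=> dpos /injectiveP finj.
have [p hp] : exists p, #|V| = p.+1.
  by exists #|V|.-1; have := mindeg_le_card; lia.
have [x fx] : exists x, (f x).+1 = #|V|.
  have pV : p < #|V| by rewrite hp.
  have /codomP [x hx] := inj_card_onto finj (eq_leq (card_ord _)) (Ordinal pV).
  by exists x; rewrite -hx /= hp.
have [y exy fy] : exists2 y, e x y & mindeg e <= (f y).+1.
  apply/exists_inP; apply: contraT => /exists_inPn small_nbrs.
  have : #|f @: [set y | e x y]| <= (mindeg e).-1.
    apply: card_ord_lt => i /imsetP [y]; rewrite inE => exy ->.
    by have := small_nbrs y exy; lia.
  by rewrite card_imset //; have := mindeg_le_deg x; rewrite /deg; lia.
apply: leq_trans (leq_bigmax_cond x (erefl true)).
by apply: leq_trans (leq_bigmax_cond y exy); lia.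
Qed.

Lemma str_ge : 0 < mindeg e -> #|V| + mindeg e <= str e.
Proof.
move=> dpos; rewrite /str -minEnat; apply: (@le_bigmin _ nat) => [|f /(strf_ge dpos) //].
by have := mindeg_le_card; lia.
Qed.
End LowerBound.

Section WeightNumbering.
Variables (V : finType) (W : V -> nat).

Definition wrank (x : V) : nat := #|[set z | W z <= W x]|.

Lemma wrank_mono x y : W x <= W y -> wrank x <= wrank y.
Proof.
move=> le_xy; apply: subset_leq_card; apply/subsetP => z; rewrite !inE => le_zx.
exact: leq_trans le_xy.
Qed.

Lemma enum_rank_lt (x : V) : enum_rank x < #|V|.
Proof. exact: ltn_ord. Qed.

(* An injective refinement of W, breaking ties by the enumeration rank. *)
Definition tiekey (x : V) : nat := W x * #|V| + enum_rank x.

Lemma tiekey_W x z : tiekey z <= tiekey x -> W z <= W x.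
Proof.
rewrite /tiekey => le_zx; rewrite leqNgt; apply/negP => lt_xz.
have := enum_rank_lt x; have := enum_rank_lt z.
have : (W x).+1 * #|V| <= W z * #|V| by rewrite leq_mul2r lt_xz orbT.
rewrite mulSn; lia.
Qed.

Lemma tiekey_inj : injective tiekey.
Proof.
move=> x y eq_xy.
have eqW : W x = W y.
  by apply/eqP; rewrite eqn_leq !tiekey_W // eq_xy.
by move: eq_xy; rewrite /tiekey eqW => /addnI /val_inj /enum_rank_inj.
Qed.

Definition label (x : V) : nat := #|[set z | tiekey z < tiekey x]|.

Lemma label_lt_wrank x : label x < wrank x.
Proof.
apply: (@leq_trans #|[set z | tiekey z <= tiekey x]|).
  apply: proper_card; apply/properP; split; last by exists x; rewrite !inE ?ltnn.
  by apply/subsetP => z; rewrite !inE => /ltnW.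
by apply: subset_leq_card; apply/subsetP => z; rewrite !inE => /tiekey_W.
Qed.

Lemma label_lt_card x : label x < #|V|.
Proof. exact: leq_trans (label_lt_wrank x) (max_card _). Qed.

Lemma label_mono x y : tiekey x < tiekey y -> label x < label y.
Proof.
move=> lt_xy; apply: proper_card; apply/properP; split.
  by apply/subsetP => z; rewrite !inE => /ltn_trans; apply.
by exists x; rewrite !inE ?ltnn.
Qed.

Definition wnumbering : {ffun V -> 'I_#|V|} := [ffun x => Ordinal (label_lt_card x)].

Lemma wnumbering_inj : injectiveb wnumbering.
Proof.
apply/injectiveP => x y; rewrite !ffunE => /(congr1 val) /= eq_lab.
case: (ltngtP (tiekey x) (tiekey y)) => [/label_mono|/label_mono|/tiekey_inj //];
  by rewrite eq_lab ltnn.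
Qed.

Lemma wnumbering_le x : (wnumbering x).+1 <= wrank x.
Proof. by rewrite ffunE; apply: label_lt_wrank. Qed.
End WeightNumbering.

Lemma str_le_wrank (V : finType) (e : rel V) (W : V -> nat) (B : nat) :
  (forall x y, e x y -> wrank W x + wrank W y <= B) -> str e <= B.
Proof.
move=> edgeB; rewrite /str -minEnat.
apply: leq_trans (@bigmin_le_cond _ nat _ _ _ _ (strf e) (wnumbering_inj W)) _.
apply/bigmax_leqP => x _; apply/bigmax_leqP => y exy.
exact: leq_trans (leq_add (wnumbering_le W x) (wnumbering_le W y)) (edgeB x y exy).
Qed.

Section DSequence.
Variables (V : finType) (e : rel V).
Hypotheses (e_sym : symmetric e) (e_irr : irreflexive e).
Variables (s : nat) (S : nat -> {set V}) (u : nat -> V).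
Hypothesis dseq : is_dseq e s S u.

Lemma dseq_len : 2 <= s. Proof. by case: dseq. Qed.
Lemma dseq_first : S 1 = setT. Proof. by case: dseq. Qed.
Lemma dseq_step i : 1 <= i < s ->
  [/\ ~~ terminal e (S i), u i \in core e (S i) &
      S i.+1 = core e (S i) :\: (u i |: nbr e (core e (S i)) (u i))].
Proof. by case: dseq => _ _ step _; apply: step. Qed.

Lemma core_sub (A : {set V}) : core e A \subset A.
Proof. by apply/subsetP => x; rewrite inE => /andP []. Qed.

Lemma dseq_next_sub i : 1 <= i < s -> S i.+1 \subset core e (S i).
Proof. by move=> /dseq_step [_ _ ->]; apply: subsetDl. Qed.

Lemma dseq_decr i j : 1 <= i <= j -> j <= s -> S j \subset S i.
Proof.
move=> /andP [i_pos]; elim: j => [|j IH] le_ij le_js; first by lia.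
case: (ltngtP i j.+1) le_ij => // [lt_ij _|-> _]; last exact: subxx.
have j_s : 1 <= j < s by lia.
apply: subset_trans (IH ltac:(lia) ltac:(lia)).
exact: subset_trans (dseq_next_sub j_s) (core_sub _).
Qed.

Definition stage (x : V) : nat := \max_(i < s.+1 | (0 < i) && (x \in S i)) i.

Lemma stage_max x j : 1 <= j <= s -> x \in S j -> j <= stage x.
Proof.
move=> hj xSj; have js : j < s.+1 by lia.
by apply: (@leq_bigmax_cond _ _ (fun i : 'I_s.+1 => nat_of_ord i) (Ordinal js)); rewrite /= xSj; lia.
Qed.

Lemma stage_spec x : [/\ 1 <= stage x, stage x <= s & x \in S (stage x)].
Proof.
pose A := [pred i : 'I_s.+1 | (0 < i) && (x \in S i)].
have one_s : 1 < s.+1 by have := dseq_len; lia.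
have A_ne : 0 < #|A| by apply/card_gt0P; exists (Ordinal one_s); rewrite inE dseq_first inE.
have -> : stage x = \max_(i in A) i by apply: eq_bigl => i; rewrite inE.
have [i0 Ai0 ->] := @eq_bigmax_cond _ A (fun i => nat_of_ord i) A_ne.
by move: Ai0; rewrite inE => /andP [i0_pos ->]; have := ltn_ord i0; split => //; lia.
Qed.

Lemma stage_ge1 x : 1 <= stage x. Proof. by case: (stage_spec x). Qed.
Lemma stage_le x : stage x <= s. Proof. by case: (stage_spec x). Qed.
Lemma mem_stage x : x \in S (stage x). Proof. by case: (stage_spec x). Qed.

Lemma mem_before_stage x i : 1 <= i <= stage x -> x \in S i.
Proof.
move=> hi; apply: (subsetP (dseq_decr hi (stage_le x))); exact: mem_stage.
Qed.

Lemma core_before_stage x i : 1 <= i < stage x -> x \in core e (S i).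
Proof.
move=> hi; have := stage_le x => stage_s.
have i_s : 1 <= i < s by lia.
by apply: (subsetP (dseq_next_sub i_s)); apply: mem_before_stage; lia.
Qed.

(* The pivot of stage i is u i, or, at the terminal stage, a vertex of the
   complete graph G_s. *)
Definition pivot (i : nat) : V :=
  if i < s then u i else odflt (u i) [pick y in core e (S i)].

(* The three kinds of vertices: those isolated at their stage ("dropped"),
   the pivots, and the remaining ones ("followers"), which are the
   neighbours of the pivot of their stage. *)
Definition dropped x := x \notin core e (S (stage x)).
Definition is_pivot x := x == pivot (stage x).
Definition follower x := ~~ dropped x && ~~ is_pivot x.

Lemma pivot_spec i : 1 <= i <= s -> core e (S i) != set0 ->
  stage (pivot i) = i /\ pivot i \in core e (S i).
Proof.
move=> hi core_ne; rewrite /pivot; case: ltnP => [lt_is|le_si].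
  have [_ ui_core S_next] := dseq_step (i := i) ltac:(lia).
  split => //; have := stage_max hi (subsetP (core_sub _) _ ui_core).
  case: (ltngtP i (stage (u i))) => // lt_i _.
  have : u i \in S i.+1 by apply: mem_before_stage; have := stage_le (u i); lia.
  by rewrite S_next !inE eqxx.
case: pickP => [y y_core|none]; last by case/set0Pn: core_ne => y; rewrite none.
split => //=; have := stage_max hi (subsetP (core_sub _) _ y_core).
by have := stage_le y; lia.
Qed.

Lemma mem_core_upto z i :
  1 <= i <= stage z -> ~~ dropped z || (i < stage z) -> z \in core e (S i).
Proof.
move=> hi; case: (ltnP i (stage z)) => [lt_iz _|le_zi]; first by apply: core_before_stage; lia.
have -> : i = stage z by lia.
by rewrite orbF negbK.
Qed.

(* Weights realising the ordering of the paper: a follower of stage i weighs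
   o + i, the pivot of stage i weighs b + 2(s - i) and a vertex dropped at
   stage i weighs b + 2(s - i) + 1.  When o + s < b the followers come first,
   by increasing stage, then pivots and dropped vertices by decreasing stage. *)
Definition key (o b : nat) (x : V) : nat :=
  if dropped x then b + 2 * (s - stage x) + 1
  else if is_pivot x then b + 2 * (s - stage x) else o + stage x.

Lemma key_follower o b x : follower x -> key o b x = o + stage x.
Proof. by rewrite /key /follower => /andP [/negbTE -> /negbTE ->]. Qed.

Lemma key_nonfollower o b x :
  ~~ follower x -> key o b x = b + 2 * (s - stage x) + dropped x.
Proof. by rewrite /key /follower negb_and !negbK; case: (dropped x) => //= ->; lia. Qed.

Lemma key_pivot o b i : 1 <= i <= s -> core e (S i) != set0 ->
  key o b (pivot i) = b + 2 * (s - i).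
Proof.
by move=> hi core_ne; have [st pc] := pivot_spec hi core_ne; rewrite /key /dropped /is_pivot st pc eqxx.
Qed.

Lemma key_gt o b x : o + s < b -> o < key o b x.
Proof.
move=> ob; have := stage_ge1 x; have := stage_le x.
by case: (boolP (follower x)) => [/key_follower|/key_nonfollower] ->; lia.
Qed.

Lemma key_lt_base o b x : key o b x < b -> follower x /\ key o b x = o + stage x.
Proof.
by case: (boolP (follower x)) => [/key_follower|/key_nonfollower] ->; [|lia].
Qed.

Definition above (i : nat) (z : V) : Prop :=
  z = pivot i \/ (follower z /\ stage z = i) \/ i < stage z.

Lemma key_above o b i z : o + s < b -> 1 <= i <= s -> core e (S i) != set0 ->
  above i z -> key o b z <= key o b (pivot i).
Proof.
move=> ob hi core_ne abv; rewrite key_pivot //; have := stage_le z.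
case: abv => [->|[[fz <-]|lt_iz]]; first by rewrite key_pivot.
  by rewrite key_follower //; lia.
by case: (boolP (follower z)) => [/key_follower|/key_nonfollower] ->;
  [lia|case: (dropped z) => /=; lia].
Qed.

Definition anchored (i : nat) (x y : V) : Prop :=
  [/\ 1 <= i <= s, core e (S i) != set0, follower x, stage x = i & above i y].

Lemma edge_anchored_le x y : e x y -> stage x <= stage y ->
  exists i, anchored i x y \/ anchored i y x.
Proof.
move=> exy le_xy; set i := stage x.
have hi : 1 <= i <= s by rewrite stage_ge1 stage_le.
have xS : x \in S i := mem_stage x.
have yS : y \in S i by apply: mem_before_stage; rewrite stage_ge1.
have xc : x \in core e (S i).
  by rewrite inE xS; apply/set0Pn; exists y; rewrite inE yS exy.
have yc : y \in core e (S i).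
  by rewrite inE yS; apply/set0Pn; exists x; rewrite inE xS e_sym exy.
have core_ne : core e (S i) != set0 by apply/set0Pn; exists x.
exists i; case: (eqVneq x (pivot i)) => [x_piv|x_npiv]; last first.
  left; split; rewrite /follower /dropped /is_pivot -/i ?xc ?x_npiv //.
  case: (ltngtP i (stage y)) le_xy => // [lt_xy _|st_y _]; first by right; right.
  case: (eqVneq y (pivot i)) => [|y_npiv]; first by left.
  by right; left; rewrite /follower /dropped /is_pivot -st_y yc y_npiv.
(* x is the pivot, so its neighbour y is removed together with it *)
have st_y : stage y = i.
  case: (ltngtP i (stage y)) le_xy => // lt_xy _.
  have i_s : i < s by have := stage_le y; lia.
  have [_ _ S_next] := dseq_step (i := i) ltac:(lia).
  have y_next : y \in S i.+1 by apply: mem_before_stage; lia.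
  have ui_x : u i = x by rewrite x_piv /pivot i_s.
  by move: y_next; rewrite S_next ui_x in_setD in_setU1 [y \in nbr _ _ _]inE yc exy orbT.
right; split => //; last by left.
rewrite /follower /dropped /is_pivot st_y yc /=; apply/eqP => y_piv.
by move: exy; rewrite x_piv -y_piv e_irr.
Qed.

Lemma edge_anchored x y : e x y -> exists i, anchored i x y \/ anchored i y x.
Proof.
move=> exy; case: (leqP (stage x) (stage y)) => [le_xy|/ltnW le_yx].
  exact: edge_anchored_le.
have [i anch] := edge_anchored_le (y := x) (x := y) ltac:(by rewrite e_sym) le_yx.
by exists i; case: anch; [right|left].
Qed.

Definition Dsum (i : nat) : nat := \sum_(1 <= k < i.+1) dval e s S u k.
Definition Msum (i : nat) : nat := \sum_(1 <= k < i.+1) (mval e S k + 1).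

Lemma Dsum0 : Dsum 0 = 0. Proof. by rewrite /Dsum big_geq. Qed.
Lemma Msum0 : Msum 0 = 0. Proof. by rewrite /Msum big_geq. Qed.
Lemma DsumS i : Dsum i.+1 = Dsum i + dval e s S u i.+1.
Proof. by rewrite /Dsum big_nat_recr. Qed.
Lemma MsumS i : Msum i.+1 = Msum i + (mval e S i.+1 + 1).
Proof. by rewrite /Msum big_nat_recr. Qed.
Lemma Dsum_pred i : 0 < i -> Dsum i = Dsum i.-1 + dval e s S u i.
Proof. by case: i => // i _; rewrite DsumS. Qed.
Lemma Msum_pred i : 0 < i -> Msum i = Msum i.-1 + (mval e S i + 1).
Proof. by case: i => // i _; rewrite MsumS. Qed.

Lemma card_core (A : {set V}) : #|A| = mcount e A + #|core e A|.
Proof. by rewrite /mcount -(cardsID (core e A) A) (setIidPr (core_sub A)) addnC. Qed.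

Lemma core_step i : 1 <= i < s -> 1 + dval e s S u i + #|S i.+1| <= #|core e (S i)|.
Proof.
move=> hi; have [_ ui_core S_next] := dseq_step hi.
rewrite /dval (_ : i < s = true); last by lia.
set C := core e (S i); set N := nbr e C (u i).
have sub : u i |: N \subset C.
  apply/subsetP => x; rewrite in_setU1 => /orP [/eqP ->|] //.
  by rewrite inE => /andP [].
rewrite -(cardsID (u i |: N) C) (setIidPr sub) S_next cardsU1.
by rewrite [u i \in N]inE e_irr andbF.
Qed.

(* Steps 1..i remove m_k isolated vertices, u_k and its d_k neighbours each:
   (m_1 + 1 + d_1) + ... + (m_i + 1 + d_i) + |S_(i+1)| <= p. *)
Lemma budget i : 1 <= i <= s ->
  Msum i.-1 + Dsum i.-1 + mval e S i + #|core e (S i)| <= #|V|.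
Proof.
elim: i => [|[|i] IH] hi //.
  by rewrite Msum0 Dsum0 /mval -card_core dseq_first cardsT.
have := IH ltac:(lia); have := core_step (i := i.+1) ltac:(lia).
by rewrite MsumS DsumS (card_core (S i.+2)) /mval /=; lia.
Qed.

(* At the terminal stage, d_s = r - 1 for the clique K_r (or 0). *)
Lemma dval_last_le : dval e s S u s <= #|core e (S s)|.
Proof. by rewrite /dval ltnn; case: eqP => // _; apply: leq_pred. Qed.

Lemma budget_last : Msum s + Dsum s <= #|V| + 1.
Proof.
have s_pos : 0 < s by have := dseq_len; lia.
have := budget (i := s) ltac:(lia); have := dval_last_le.
by rewrite (Msum_pred s_pos) (Dsum_pred s_pos); lia.
Qed.

(* The followers of stage k are neighbours of the pivot removed with it, or,
   at the terminal stage, the vertices of the clique other than the pivot. *)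
Lemma card_followers_at k : #|[set x | follower x && (stage x == k)]| <= dval e s S u k.
Proof.
case: (boolP (1 <= k <= s)) => hk; last first.
  rewrite (_ : [set _ | _] = set0) ?cards0 //; apply/setP => x; rewrite !inE.
  apply/negP => /andP [_ /eqP st_x]; move: hk; rewrite -st_x stage_ge1 stage_le.
  by [].
rewrite /dval; case: ltnP => [lt_ks|le_sk].
  apply: subset_leq_card; apply/subsetP => x.
  rewrite inE /follower /dropped /is_pivot /pivot => /andP [/andP [xc xnp] /eqP st_x].
  rewrite st_x lt_ks negbK in xc xnp.
  have [_ _ S_next] := dseq_step (i := k) ltac:(lia).
  have : x \notin S k.+1 by apply/negP => /(stage_max (j := k.+1)) ?; lia.
  by rewrite S_next in_setD in_setU1 xc (negbTE xnp) andbT negbK.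
have ek : k = s by lia.
have sub : [set x | follower x && (stage x == k)] \subset core e (S k) :\ pivot k.
  apply/subsetP => x; rewrite inE in_setD1 /follower /dropped /is_pivot.
  by move=> /andP [/andP [xc xnp] /eqP st_x]; rewrite -st_x xnp negbK in xc *.
apply: leq_trans (subset_leq_card sub) _.
case: eqP => [->|/eqP core_ne]; first by rewrite set0D cards0.
have [_ pc] := pivot_spec (i := k) ltac:(lia) core_ne.
by rewrite (cardsD1 (pivot k) (core e (S k))) pc.
Qed.

Lemma card_followers_upto i : #|[set x | follower x && (stage x <= i)]| <= Dsum i.
Proof.
elim: i => [|i IH].
  rewrite Dsum0 leqn0 cards_eq0; apply/eqP/setP => x; rewrite !inE.
  by rewrite leqn0 eqn0Ngt stage_ge1 andbF.
rewrite DsumS; apply: leq_trans (leq_add IH (card_followers_at i.+1)).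
apply: leq_trans (leq_card_setU _ _); apply: subset_leq_card; apply/subsetP => x.
by rewrite !inE leq_eqVlt ltnS; case: (follower x) => //=; rewrite orbC.
Qed.

Lemma card_key_le_follower o b i : o + s < b -> i <= s ->
  #|[set z | key o b z <= o + i]| <= Dsum i.
Proof.
move=> ob hi; apply: leq_trans (card_followers_upto i); apply: subset_leq_card.
apply/subsetP => z; rewrite !inE => le_z.
have [fz kz] := key_lt_base (o := o) (b := b) (x := z) ltac:(lia).
by rewrite fz; lia.
Qed.

Lemma card_key_lt_base o b k : o + s < b -> k < b ->
  #|[set z | key o b z <= k]| <= Dsum s.
Proof.
move=> ob kb; apply: leq_trans (card_key_le_follower ob (leqnn s)).
apply: subset_leq_card; apply/subsetP => z; rewrite !inE => le_z.
have [_ ->] := key_lt_base (leq_ltn_trans le_z kb); have := stage_le z; lia.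
Qed.

Lemma card_key_le_pivot o b i : o + s < b -> 1 <= i <= s -> core e (S i) != set0 ->
  #|[set z | key o b z <= key o b (pivot i)]| <= Dsum i.-1 + #|core e (S i)|.
Proof.
move=> ob hi core_ne; apply: leq_trans (leq_add (card_followers_upto i.-1) (leqnn _)).
apply: leq_trans (leq_card_setU _ _); apply: subset_leq_card.
apply/subsetP => z; rewrite key_pivot // inE in_setU inE.
have := stage_le z; have := stage_ge1 z.
case: (boolP (follower z)) => [fz|nfz] z1 zs le_z /=.
  rewrite key_follower // in le_z.
  case: (ltnP (stage z) i) => [lt_zi|le_iz]; first by apply/orP; left; lia.
  apply/orP; right; apply: mem_core_upto; first by lia.
  by move: fz; rewrite /follower => /andP [->].
rewrite key_nonfollower // in le_z.
by apply: mem_core_upto; move: le_z; case: (dropped z) => /=; lia.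
Qed.

Local Open Scope ring_scope.

Lemma zval1 : zval e s S u 1 = 0.
Proof. by rewrite /zval big_geq. Qed.

Lemma zval_sums i : (1 <= i)%N -> zval e s S u i =
  (Msum i)%:Z - (Dsum i)%:Z - (mval e S 1 + 1)%:Z + (dval e s S u 1)%:Z.
Proof.
elim: i => // i IH _; case: (posnP i) => [->|i_pos].
  by rewrite zval1 /Msum /Dsum !big_nat1; lia.
rewrite /zval big_nat_recr /=; last by lia.
by rewrite -/(zval e s S u i) IH // MsumS DsumS /yval; lia.
Qed.

Lemma zmin_le j : (2 <= j <= s)%N -> zmin e s S u <= zval e s S u j.
Proof.
move=> hj; apply: ge_bigmin_seq => //; rewrite mem_index_iota; lia.
Qed.
End DSequence.

Lemma card_sum_split (V1 V2 : finType) (A : {set V1 + V2}) :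
  #|A| <= #|[set a | inl a \in A]| + #|[set b | inr b \in A]|.
Proof.
apply: (@leq_trans #|inl @: [set a | inl a \in A] :|: inr @: [set b | inr b \in A]|).
  apply: subset_leq_card; apply/subsetP => -[a|b] zA; rewrite in_setU.
    by apply/orP; left; apply/imsetP; exists a; rewrite ?inE.
  by apply/orP; right; apply/imsetP; exists b; rewrite ?inE.
apply: leq_trans (leq_card_setU _ _) _.
by rewrite !card_imset //; move=> x y [].
Qed.

Lemma nbr_of_mindeg (V : finType) (e : rel V) x : 0 < mindeg e -> exists y, e x y.
Proof.
move=> /leq_trans /(_ (mindeg_le_deg e x)) /card_gt0P [y].
by rewrite inE; exists y.
Qed.

Lemma mindeg_sumrel_gt0 (V1 V2 : finType) (e1 : rel V1) (e2 : rel V2) :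
  0 < mindeg e1 -> 0 < mindeg e2 -> 0 < mindeg (sumrel e1 e2).
Proof.
move=> pos1 pos2; rewrite /mindeg -minEnat; apply: (@lt_bigmin _ nat).
  by rewrite card_sum; have := mindeg_le_card e1; lia.
move=> [a|b] _; apply/card_gt0P.
  by have [a' ea] := nbr_of_mindeg a pos1; exists (inl a'); rewrite inE.
by have [b' eb] := nbr_of_mindeg b pos2; exists (inr b'); rewrite inE.
Qed.

Section DisjointUnion.
Variables (VH VT : finType) (eH : rel VH) (eT : rel VT).
Hypotheses (eH_sym : symmetric eH) (eH_irr : irreflexive eH)
           (eT_sym : symmetric eT) (eT_irr : irreflexive eT).
Variables (s : nat) (SH : nat -> {set VH}) (uH : nat -> VH).
Hypothesis dsH : is_dseq eH s SH uH.
Variables (t : nat) (ST : nat -> {set VT}) (uT : nat -> VT).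
Hypothesis dsT : is_dseq eT t ST uT.

(* The numbering of G = H + T lists the followers of T, then the followers
   of H, then the remaining vertices of H, then those of T. *)
Local Notation keyH := (key eH s SH uH t (t + s + 1)).
Local Notation keyT := (key eT t ST uT 0 (t + 3 * s + 3)).

Definition weight (z : VH + VT) : nat :=
  match z with inl a => keyH a | inr b => keyT b end.

Lemma wrank_split z :
  wrank weight z <= #|[set a | keyH a <= weight z]| + #|[set b | keyT b <= weight z]|.
Proof.
apply: leq_trans (card_sum_split _) _.
by apply: leq_add; apply: subset_leq_card; apply/subsetP => x; rewrite !inE.
Qed.

(* A follower of T of stage i is preceded only by followers of T of stages
   <= i; the pivot of stage i of T by all of H, the followers of T of earlier
   stages and the vertices of the core of stage i. *)
Lemma wrank_T_follower a : follower eT t ST uT a ->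
  wrank weight (inr a) <= Dsum eT t ST uT (stage t ST a).
Proof.
move=> fa; apply: leq_trans (wrank_split _) _.
have H_empty : [set a' | keyH a' <= weight (inr a)] = set0.
  apply/setP => a'; rewrite !inE /= (key_follower _ _ fa); apply/negbTE; rewrite -ltnNge.
  by have := key_gt dsH a' (ltac:(lia) : t + s < t + s + 1); have := stage_le dsT a; lia.
rewrite H_empty cards0 /= (key_follower _ _ fa).
by rewrite add0n; apply: (card_key_le_follower dsT); [lia|exact: stage_le dsT a].
Qed.

Lemma wrank_T_pivot i : 1 <= i <= t -> core eT (ST i) != set0 ->
  wrank weight (inr (pivot eT t ST uT i)) <=
  #|VH| + (Dsum eT t ST uT i.-1 + #|core eT (ST i)|).
Proof.
move=> hi core_ne; apply: leq_trans (wrank_split _) _.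
apply: leq_add; first exact: max_card.
by apply: (card_key_le_pivot dsT) => //; lia.
Qed.

(* Similarly in H, except that all the followers of T come first. *)
Lemma wrank_H_follower a : follower eH s SH uH a ->
  wrank weight (inl a) <= Dsum eH s SH uH (stage s SH a) + Dsum eT t ST uT t.
Proof.
move=> fa; apply: leq_trans (wrank_split _) _; rewrite /= (key_follower _ _ fa).
have := stage_le dsH a => le_as.
apply: leq_add; first by apply: (card_key_le_follower dsH) => //; lia.
by apply: (card_key_lt_base dsT); lia.
Qed.

Lemma wrank_H_pivot j : 1 <= j <= s -> core eH (SH j) != set0 ->
  wrank weight (inl (pivot eH s SH uH j)) <=
  Dsum eH s SH uH j.-1 + #|core eH (SH j)| + Dsum eT t ST uT t.
Proof.
move=> hj core_ne; apply: leq_trans (wrank_split _) _.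
apply: leq_add; first by apply: (card_key_le_pivot dsH) => //; lia.
by rewrite /= (key_pivot dsH _ _ hj core_ne); apply: (card_key_lt_base dsT); lia.
Qed.

Local Open Scope ring_scope.
Hypothesis zT_nonneg : forall i, (2 <= i <= t)%N -> 0 <= zval eT t ST uT i.
Hypothesis zH_min_nonpos : zmin eH s SH uH <= 0.
Hypothesis zT_last : (dval eH s SH uH 1)%:Z - zmin eH s SH uH <= zval eT t ST uT t.
Local Close Scope ring_scope.

(* Edges of T: since z_i(T) >= 0, the T-vertices removed up to stage i leave
   room for the d_1 + ... + d_i followers numbered below. *)
Lemma wrank_T_anchored i a b : anchored eT t ST uT i a b ->
  wrank weight (inr a) + wrank weight (inr b) <= #|VH| + #|VT| + dval eT t ST uT 1.
Proof.
case=> hi core_ne fa st_a ab.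
have rank_a := wrank_T_follower fa; rewrite st_a in rank_a.
have rank_b : wrank weight (inr b) <= wrank weight (inr (pivot eT t ST uT i)).
  by apply: wrank_mono; apply: (key_above dsT) => //; lia.
have rank_piv := wrank_T_pivot hi core_ne.
have z_i : (0 <= zval eT t ST uT i)%R.
  case: (ltnP 1 i) => [lt1i|le_i1]; first by apply: zT_nonneg; lia.
  by rewrite (_ : i = 1%N) ?zval1 //; lia.
have i_pos : (0 < i)%N by lia.
have eD := Dsum_pred eT t ST uT i_pos; have eM := Msum_pred eT ST i_pos.
rewrite zval_sums // in z_i.
by have := budget eT_irr dsT hi; lia.
Qed.

(* Edges of H: the followers of T are numbered below, and the condition
   z_t(T) >= d_H - Z pays for them. *)
Lemma wrank_H_anchored j a b : anchored eH s SH uH j a b ->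
  wrank weight (inl a) + wrank weight (inl b) <= #|VH| + #|VT| + dval eT t ST uT 1.
Proof.
case=> hj core_ne fa st_a ab.
have rank_a := wrank_H_follower fa; rewrite st_a in rank_a.
have rank_b : wrank weight (inl b) <= wrank weight (inl (pivot eH s SH uH j)).
  by apply: wrank_mono; apply: (key_above dsH) => //; lia.
have rank_piv := wrank_H_pivot hj core_ne.
have z_j : (zmin eH s SH uH <= zval eH s SH uH j)%R.
  case: (ltnP 1 j) => [lt1j|le_j1]; first by apply: zmin_le; lia.
  by rewrite (_ : j = 1%N) ?zval1 //; lia.
have j_pos : (0 < j)%N by lia.
have eD := Dsum_pred eH s SH uH j_pos; have eM := Msum_pred eH SH j_pos.
rewrite zval_sums // in z_j.
have z_t := zT_last; rewrite zval_sums in z_t; last by have := dseq_len dsT; lia.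
by have := budget eH_irr dsH hj; have := budget_last eT_irr dsT; lia.
Qed.

Lemma wrank_edge x y : sumrel eH eT x y ->
  wrank weight x + wrank weight y <= #|VH| + #|VT| + dval eT t ST uT 1.
Proof.
case: x y => [a|a] [b|b] //= eab.
  have [j [anch|anch]] := edge_anchored eH_sym eH_irr dsH eab.
    exact: wrank_H_anchored anch.
  by rewrite addnC; apply: wrank_H_anchored anch.
have [i [anch|anch]] := edge_anchored eT_sym eT_irr dsT eab.
  exact: wrank_T_anchored anch.
by rewrite addnC; apply: wrank_T_anchored anch.
Qed.
End DisjointUnion.

Unset Implicit Arguments. Set Strict Implicit.

Theorem mainTheorem7 (VH VT : finType) (eH : rel VH) (eT : rel VT)
  (eH_sym : symmetric eH) (eH_irr : irreflexive eH)
  (eT_sym : symmetric eT) (eT_irr : irreflexive eT)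
  (degH : 1 <= mindeg eH <= #|VH| - 2)
  (degT : 1 <= mindeg eT <= #|VT| - 2)
  (s : nat) (SH : nat -> {set VH}) (uH : nat -> VH)
  (dsH : is_dseq eH s SH uH)
  (hZ : (zmin eH s SH uH <= 0)%R)
  (t : nat) (ST : nat -> {set VT}) (uT : nat -> VT)
  (dsT : is_dseq eT t ST uT)
  (hzT : forall i, 2 <= i <= t -> (0 <= zval eT t ST uT i)%R)
  (hcond : ((dval eH s SH uH 1)%:Z - zmin eH s SH uH <= zval eT t ST uT t)%R) :
  #|{: VH + VT}| + mindeg (sumrel eH eT) <= str (sumrel eH eT)
  <= #|{: VH + VT}| + dval eT t ST uT 1.
Proof.
apply/andP; split.
  by apply: str_ge; apply: mindeg_sumrel_gt0; lia.
apply: str_le_wrank => x y exy; rewrite card_sum.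
exact: (wrank_edge eH_sym eH_irr eT_sym eT_irr dsH dsT hzT hZ hcond exy).
Qed.
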